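(* Let $F$ be a Banach lattice, $H\subset F$ a subspace and $0<r\le1$. Then $H$ contains no pair $e,f$ of unit vectors with $\||e|\wedge|f|\|<r$ if and only if $H$ has the $\frac1r$-SPR property, i.e. $\min(\|g+h\|,\|g-h\|)\le\frac1r\,\||g|-|h|\|$ for all $g,h\in H$.
   Context: For $s\ge1$, a subspace $H$ of a Banach lattice has the $s$-stable phase retrieval ($s$-SPR) property if $\|g+h\|\wedge\|g-h\|\le s\,\||g|-|h|\|$ for all $g,h\in H$. *)

From mathcomp Require Import all_boot all_order all_algebra.
From mathcomp Require Import all_classical all_reals all_analysis.
Set Implicit Arguments. Unset Strict Implicit. Unset Printing Implicit Defensive.
Import Order.TTheory GRing.Theory Num.Theory.
Import numFieldNormedType.Exports.
Local Open Scope classical_set_scope.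
Local Open Scope ring_scope.

Section BanachLattice.
Variables (R : realType) (V : completeNormedModType R).
Variables (join meet : V -> V -> V).

Definition bl_le (x y : V) : Prop := join x y = y.

Definition bl_abs (x : V) : V := join x (- x).

Definition is_banach_lattice : Prop :=
  (forall x y, join x y = join y x) /\
      (forall x y, meet x y = meet y x) /\
      (forall x y z, join x (join y z) = join (join x y) z) /\
      (forall x y z, meet x (meet y z) = meet (meet x y) z) /\
      (forall x y, join x (meet x y) = x) /\
      (forall x y, meet x (join x y) = x) /\
      (forall x y z, bl_le x y -> bl_le (x + z) (y + z)) /\
      (forall (a : R) x, 0 <= a -> bl_le 0 x -> bl_le 0 (a *: x)) /\
      (forall x y, bl_le (bl_abs x) (bl_abs y) -> `|x| <= `|y|).

Definition is_subspace (H : set V) : Prop :=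
  [/\ H 0,
      (forall x y, H x -> H y -> H (x + y)) &
      (forall (a : R) x, H x -> H (a *: x))].

Definition SPR (s : R) (H : set V) : Prop :=
  forall g h, H g -> H h ->
    Num.min `|g + h| `|g - h| <= s * `|bl_abs g - bl_abs h|.

End BanachLattice.

From mathcomp Require Import all_boot all_order all_algebra.
From mathcomp Require Import all_classical all_reals all_analysis.
Import Order.TTheory GRing.Theory Num.Theory.
Import numFieldNormedType.Exports.

Set Implicit Arguments.
Unset Strict Implicit.
Unset Printing Implicit Defensive.
Local Open Scope classical_set_scope.
Local Open Scope ring_scope.

(* The identity ||g| - |h|| = |g + h| meet |g - h| turns the 1/r-SPR property
   of H, after the substitution x = g + h, y = g - h, into
   r min(||x||, ||y||) <= || |x| meet |y| || for all x, y in H.  By homogeneity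
   this reduces to unit vectors: if 0 < ||x|| <= ||y|| then |y| / ||y|| is
   below |y| / ||x||, so normalizing x and y shrinks the meet by at least the
   factor ||x||. *)

Lemma scale_half_double (R : numFieldType) (V : lmodType R) (v : V) :
  (2 : R)^-1 *: (v + v) = v.
Proof.
by rewrite -mulr2n -(scaler_nat 2 v) scalerA mulVf ?scale1r // pnatr_eq0.
Qed.

Lemma half_sum_add_half_diff (R : numFieldType) (V : lmodType R) (x y : V) :
  (2 : R)^-1 *: (x + y) + (2 : R)^-1 *: (x - y) = x.
Proof. by rewrite -scalerDr addrACA subrr addr0 scale_half_double. Qed.

Lemma half_sum_sub_half_diff (R : numFieldType) (V : lmodType R) (x y : V) :
  (2 : R)^-1 *: (x + y) - (2 : R)^-1 *: (x - y) = y.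
Proof.
rewrite -scalerBr opprB [y - x]addrC addrA [x + y - x]addrAC subrr add0r.
exact: scale_half_double.
Qed.

Lemma subspaceB (R : realType) (V : completeNormedModType R) (H : set V) :
  is_subspace H -> forall x y, H x -> H y -> H (x - y).
Proof. by case=> _ Hadd Hsc x y Hx Hy; rewrite -scaleN1r in Hy *; apply/Hadd/Hsc. Qed.

Section BanachLattice.
Variables (R : realType) (V : completeNormedModType R) (join meet : V -> V -> V).
Hypothesis HBL : is_banach_lattice join meet.

Local Notation le := (bl_le join).
Local Notation ab := (bl_abs join).

Let joinC x y : join x y = join y x.
Proof. by have [h _] := HBL; apply: h. Qed.
Let meetC x y : meet x y = meet y x.
Proof. by have [_ [h _]] := HBL; apply: h. Qed.
Let joinA x y z : join x (join y z) = join (join x y) z.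
Proof. by have [_ [_ [h _]]] := HBL; apply: h. Qed.
Let meetA x y z : meet x (meet y z) = meet (meet x y) z.
Proof. by have [_ [_ [_ [h _]]]] := HBL; apply: h. Qed.
Let joinKI x y : join x (meet x y) = x.
Proof. by have [_ [_ [_ [_ [h _]]]]] := HBL; apply: h. Qed.
Let meetKU x y : meet x (join x y) = x.
Proof. by have [_ [_ [_ [_ [_ [h _]]]]]] := HBL; apply: h. Qed.
Let le_add x y z : le x y -> le (x + z) (y + z).
Proof. by have [_ [_ [_ [_ [_ [_ [h _]]]]]]] := HBL; apply: h. Qed.
Let le_scale0 (a : R) x : 0 <= a -> le 0 x -> le 0 (a *: x).
Proof. by have [_ [_ [_ [_ [_ [_ [_ [h _]]]]]]]] := HBL; apply: h. Qed.
Let le_norm x y : le (ab x) (ab y) -> `|x| <= `|y|.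
Proof. by have [_ [_ [_ [_ [_ [_ [_ [_ h]]]]]]]] := HBL; apply: h. Qed.

Lemma bl_joinxx x : join x x = x.
Proof. by have := joinKI x (join x x); rewrite meetKU. Qed.

Lemma bl_le_refl x : le x x. Proof. exact: bl_joinxx. Qed.

Lemma bl_le_trans x y z : le x y -> le y z -> le x z.
Proof. by rewrite /bl_le => hxy hyz; rewrite -hyz joinA hxy. Qed.

Lemma bl_le_anti x y : le x y -> le y x -> x = y.
Proof. by rewrite /bl_le => hxy hyx; rewrite -hxy joinC hyx. Qed.

Lemma bl_le_joinl x y : le x (join x y).
Proof. by rewrite /bl_le joinA bl_joinxx. Qed.

Lemma bl_le_joinr x y : le y (join x y).
Proof. by rewrite joinC; apply: bl_le_joinl. Qed.

Lemma bl_join_le x y z : le x z -> le y z -> le (join x y) z.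
Proof. by rewrite /bl_le => hxz hyz; rewrite -joinA hyz hxz. Qed.

Lemma bl_leEmeet x y : le x y <-> meet x y = x.
Proof.
rewrite /bl_le; split => h; first by rewrite -h meetKU.
by rewrite -h joinC meetC joinKI.
Qed.

Lemma bl_le_meetl x y : le (meet x y) x.
Proof. by rewrite /bl_le joinC joinKI. Qed.

Lemma bl_le_meetr x y : le (meet x y) y.
Proof. by rewrite /bl_le joinC meetC joinKI. Qed.

Lemma bl_le_meet x y z : le z x -> le z y -> le z (meet x y).
Proof.
move=> /bl_leEmeet hx /bl_leEmeet hy; apply/bl_leEmeet.
by rewrite meetA hx hy.
Qed.

Lemma bl_meet_le2r x y y' : le y y' -> le (meet x y) (meet x y').
Proof.
move=> hy; apply: bl_le_meet; first exact: bl_le_meetl.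
exact: bl_le_trans (bl_le_meetr _ _) hy.
Qed.

Section OrderIsomorphism.
Variables f g : V -> V.
Hypotheses (f_mono : forall x y, le x y -> le (f x) (f y))
           (g_mono : forall x y, le x y -> le (g x) (g y))
           (fK : cancel f g) (gK : cancel g f).

Lemma order_iso_join x y : f (join x y) = join (f x) (f y).
Proof.
apply: bl_le_anti; last by apply: bl_join_le; apply: f_mono;
  [apply: bl_le_joinl | apply: bl_le_joinr].
rewrite -[X in le _ X]gK; apply: f_mono; apply: bl_join_le;
  rewrite -[X in le X _]fK; apply: g_mono; [apply: bl_le_joinl | apply: bl_le_joinr].
Qed.

Lemma order_iso_meet x y : f (meet x y) = meet (f x) (f y).
Proof.
apply: bl_le_anti; first by apply: bl_le_meet; apply: f_mono;
  [apply: bl_le_meetl | apply: bl_le_meetr].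
rewrite -[X in le X _]gK; apply: f_mono; apply: bl_le_meet;
  rewrite -[X in le _ X]fK; apply: g_mono; [apply: bl_le_meetl | apply: bl_le_meetr].
Qed.

End OrderIsomorphism.

Lemma bl_le_opp x y : le x y -> le (- y) (- x).
Proof.
move=> /(le_add (- x - y)).
by rewrite addrA subrr add0r addrC addrNK.
Qed.

Lemma bl_le_scale (a : R) x y : 0 <= a -> le x y -> le (a *: x) (a *: y).
Proof.
move=> a0 /(le_add (- x)); rewrite subrr => /(le_scale0 a0).
by move=> /(le_add (a *: x)); rewrite add0r scalerBr subrK.
Qed.

Lemma bl_le_scalel (a b : R) x : a <= b -> le 0 x -> le (a *: x) (b *: x).
Proof.
rewrite -subr_ge0 => ab0 /(le_scale0 ab0) /(le_add (a *: x)).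
by rewrite add0r scalerBl subrK.
Qed.

Lemma bl_joinDr x y z : join x y + z = join (x + z) (y + z).
Proof.
apply: (@order_iso_join (+%R^~ z) (+%R^~ (- z))) => [u v|u v|u|u].
- exact: le_add.
- exact: le_add.
- exact: addrK.
- exact: subrK.
Qed.

Lemma bl_oppI x y : - meet x y = join (- x) (- y).
Proof.
apply: bl_le_anti; last by apply: bl_join_le; apply: bl_le_opp;
  [apply: bl_le_meetl | apply: bl_le_meetr].
rewrite -[X in le _ X]opprK; apply: bl_le_opp; apply: bl_le_meet;
  rewrite -[X in le _ X]opprK; apply: bl_le_opp; [apply: bl_le_joinl | apply: bl_le_joinr].
Qed.

Lemma bl_joinI_add x y : join x y + meet x y = x + y.
Proof.
apply: (addIr (- meet x y)); rewrite addrK bl_oppI addrC bl_joinDr.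
by rewrite addKr (addrC x y) addKr joinC.
Qed.

Section PositiveScaling.
Variable a : R.
Hypothesis a_gt0 : 0 < a.

Let scale_mono (b : R) : 0 < b -> forall x y, le x y -> le (b *: x) (b *: y).
Proof. by move=> b0 x y; apply/bl_le_scale/ltW. Qed.

Let scaleK : cancel (fun x : V => a *: x) (fun x => a^-1 *: x).
Proof. by move=> x; rewrite scalerA mulVf ?scale1r ?gt_eqF. Qed.

Let scaleVK : cancel (fun x : V => a^-1 *: x) (fun x => a *: x).
Proof. by move=> x; rewrite scalerA mulfV ?scale1r ?gt_eqF. Qed.

Lemma bl_scale_join x y : a *: join x y = join (a *: x) (a *: y).
Proof.
by apply: (order_iso_join (scale_mono a_gt0) _ scaleK scaleVK); apply: scale_mono; rewrite invr_gt0.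
Qed.

Lemma bl_scale_meet x y : a *: meet x y = meet (a *: x) (a *: y).
Proof.
by apply: (order_iso_meet (scale_mono a_gt0) _ scaleK scaleVK); apply: scale_mono; rewrite invr_gt0.
Qed.

Lemma bl_abs_scale x : ab (a *: x) = a *: ab x.
Proof. by rewrite /bl_abs bl_scale_join scalerN. Qed.

End PositiveScaling.

Lemma bl_abs_ge0 x : le 0 (ab x).
Proof.
have h1 : le 0 (ab x + x) by rewrite -(addNr x); apply/le_add/bl_le_joinr.
have h2 : le (ab x + x) (ab x + ab x).
  by rewrite addrC [X in le _ X]addrC; apply/le_add/bl_le_joinl.
have half_ge0 : 0 <= 2^-1 :> R by rewrite invr_ge0.
by have := bl_le_scale half_ge0 (bl_le_trans h1 h2); rewrite scaler0 scale_half_double.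
Qed.

Lemma bl_abs_id x : le 0 x -> ab x = x.
Proof.
move=> x0; have nx0 : le (- x) 0 by rewrite -oppr0; apply: bl_le_opp.
by rewrite /bl_abs joinC; apply: bl_le_trans nx0 x0.
Qed.

Lemma bl_norm_abs x : `|ab x| = `|x|.
Proof.
have absK : ab (ab x) = ab x by apply/bl_abs_id/bl_abs_ge0.
by apply/eqP; rewrite eq_le; apply/andP; split; apply: le_norm;
  rewrite absK; apply: bl_le_refl.
Qed.

Lemma bl_norm_le x y : le 0 x -> le x y -> `|x| <= `|y|.
Proof.
move=> x0 xy; apply: le_norm; rewrite !bl_abs_id //.
exact: bl_le_trans xy.
Qed.

Lemma bl_abs_add_abs x y : ab x + ab y = join (ab (x + y)) (ab (x - y)).
Proof.
rewrite /bl_abs bl_joinDr addrC !bl_joinDr [- x + _]addrC bl_joinDr.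
rewrite [y + x]addrC [- y + x]addrC -[y - x]opprB -[- y - x]opprD [y + x]addrC.
by rewrite -!joinA [join (- (x + y)) _]joinC -joinA.
Qed.

(* |g + h| \/ |g - h| = |g| + |h| and |g + h| + |g - h| = 2 (|g| \/ |h|),
   so their meet is 2 (|g| \/ |h|) - |g| - |h| = ||g| - |h||. *)
Lemma bl_abs_sub_abs g h : ab (ab g - ab h) = meet (ab (g + h)) (ab (g - h)).
Proof.
set a := ab (g + h); set b := ab (g - h); set p := ab g; set q := ab h.
have ab_join : join a b = p + q by rewrite bl_abs_add_abs.
have ab_add : a + b = 2 *: join p q.
  rewrite bl_abs_add_abs.
  have -> : g + h + (g - h) = 2 *: g.
    by rewrite addrACA subrr addr0 scaler_nat mulr2n.
  have -> : g + h - (g - h) = 2 *: h.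
    by rewrite opprB [h - g]addrC addrA [g + h - g]addrAC subrr add0r scaler_nat mulr2n.
  by rewrite !bl_abs_scale ?ltr0n // [RHS]bl_scale_join ?ltr0n.
have -> : meet a b = a + b - join a b.
  by rewrite -(bl_joinI_add a b) addrAC subrr add0r.
rewrite ab_add ab_join bl_scale_join ?ltr0n // bl_joinDr /bl_abs !scaler_nat !mulr2n.
by congr join; [rewrite opprD addrA addrK | rewrite opprB [p + q]addrC opprD addrA addrK].
Qed.

Lemma bl_norm_meet_abs_normalize x y : 0 < `|x| <= `|y| ->
  `|meet (ab (`|x|^-1 *: x)) (ab (`|y|^-1 *: y))| <= `|x|^-1 * `|meet (ab x) (ab y)|.
Proof.
case/andP=> x_gt0 xy; have y_gt0 : 0 < `|y| by apply: lt_le_trans xy.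
have -> : `|x|^-1 * `|meet (ab x) (ab y)| = `| `|x|^-1 *: meet (ab x) (ab y)|.
  by rewrite normrZ gtr0_norm ?invr_gt0.
rewrite !bl_abs_scale ?invr_gt0 // bl_scale_meet ?invr_gt0 //; apply: bl_norm_le.
  by apply: bl_le_meet; apply: le_scale0 (bl_abs_ge0 _); rewrite invr_ge0.
by apply/bl_meet_le2r/bl_le_scalel/bl_abs_ge0; rewrite lef_pV2 ?posrE.
Qed.

Lemma no_small_unit_meetP (H : set V) (r : R) : is_subspace H -> 0 < r ->
  (~ exists e f : V, [/\ H e, H f, `|e| = 1, `|f| = 1 &
        `|meet (ab e) (ab f)| < r]) <->
  (forall x y, H x -> H y -> r * Num.min `|x| `|y| <= `|meet (ab x) (ab y)|).
Proof.
move=> HH r_gt0; split=> [no_small | bound]; last first.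
  case=> e [f [He Hf e1 f1]]; apply/negP; rewrite -leNgt.
  by have := bound _ _ He Hf; rewrite e1 f1 minxx mulr1.
have normalize_unit (z : V) : 0 < `|z| -> `| `|z|^-1 *: z| = 1.
  by move=> z0; rewrite normrZ gtr0_norm ?invr_gt0 // mulVf ?gt_eqF.
suff bound x y : H x -> H y -> `|x| <= `|y| -> r * `|x| <= `|meet (ab x) (ab y)|.
  move=> x y Hx Hy; case: (leP `|x| `|y|) => [xy | /ltW yx]; first exact: bound.
  by rewrite meetC; apply: bound.
move=> Hx Hy xy; have [-> | x_neq0] := eqVneq x 0; first by rewrite normr0 mulr0.
have x_gt0 : 0 < `|x| by rewrite normr_gt0.
rewrite -ler_pdivlMr // mulrC; apply: le_trans (bl_norm_meet_abs_normalize _).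
  rewrite leNgt; apply/negP => small; apply: no_small.
  case: HH => _ _ Hsc; exists (`|x|^-1 *: x), (`|y|^-1 *: y).
  by split; rewrite ?normalize_unit ?(lt_le_trans x_gt0) //; apply: Hsc.
by rewrite x_gt0.
Qed.

Lemma SPR_meetP (H : set V) (s : R) : is_subspace H ->
  SPR join s H <->
  (forall x y, H x -> H y -> Num.min `|x| `|y| <= s * `|meet (ab x) (ab y)|).
Proof.
move=> HH; have [_ Hadd Hsc] := HH.
split=> [spr x y Hx Hy | bound g h Hg Hh]; last first.
  rewrite -[`|ab g - ab h|]bl_norm_abs bl_abs_sub_abs.
  by apply: bound; [apply: Hadd | apply: subspaceB].
have := spr (2^-1 *: (x + y)) (2^-1 *: (x - y)).
rewrite half_sum_add_half_diff half_sum_sub_half_diff -[`|ab _ - ab _|]bl_norm_abs.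
rewrite bl_abs_sub_abs.
by rewrite half_sum_add_half_diff half_sum_sub_half_diff; apply; apply/Hsc;
  [apply: Hadd | apply: subspaceB].
Qed.

End BanachLattice.

Theorem mainTheorem17 (R : realType) (V : completeNormedModType R)
  (join meet : V -> V -> V) (HBL : is_banach_lattice join meet)
  (H : set V) (HH : is_subspace H) (r : R) (hr0 : 0 < r) (hr1 : r <= 1) :
  (~ exists e f : V, [/\ H e, H f, `|e| = 1, `|f| = 1 &
        `|meet (bl_abs join e) (bl_abs join f)| < r])
  <-> SPR join (r^-1) H.
Proof.
rewrite (no_small_unit_meetP HBL HH hr0) (SPR_meetP HBL _ HH).
split=> bound x y Hx Hy; first by rewrite ler_pdivlMl //; apply: bound.
by rewrite -(ler_pdivlMl _ _ hr0); apply: bound.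
Qed.
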